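(* Let $F$ be a posheaf on a locale $X$ such that for all $v\le u$ in $\mathcal{O}(X)$ the restriction map $F(u)\to F(v)$ is surjective and has a left adjoint $l_{v,u}:F(v)\to F(u)$. Then for all $u,v\in\mathcal{O}(X)$ and all $x\in F(v)$, $$\big(l_{v,\,u\vee v}(x)\big)|_u=l_{u\wedge v,\,u}\big(x|_{u\wedge v}\big).$$
   Context: Let $X$ be a locale with frame of opens $\mathcal{O}(X)$. A posheaf on $X$ is a sheaf of sets $F$ with (POS1) each $F(u)$ a poset; (POS2) restriction maps $F(u)\to F(v)$, $x\mapsto x|_v$ ($v\le u$), order-preserving; (POS3) if $u=\bigvee_i u_i$ and $s,t\in F(u)$ satisfy $s|_{u_i}\le t|_{u_i}$ for all $i$, then $s\le t$. A left adjoint of the restriction map $F(u)\to F(v)$ is a monotone map $l_{v,u}:F(v)\to F(u)$ with $l_{v,u}(x)\le y\iff x\le y|_v$ for $x\in F(v)$, $y\in F(u)$. *)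

Record Frame : Type := {
  op :> Type;
  fle : op -> op -> Prop;
  fle_refl : forall u, fle u u;
  fle_trans : forall u v w, fle u v -> fle v w -> fle u w;
  fle_antisym : forall u v, fle u v -> fle v u -> u = v;
  fmeet : op -> op -> op;
  fmeet_l : forall u v, fle (fmeet u v) u;
  fmeet_r : forall u v, fle (fmeet u v) v;
  fmeet_glb : forall u v w, fle w u -> fle w v -> fle w (fmeet u v);
  fsup : forall (I : Type), (I -> op) -> op;
  fsup_ub : forall (I : Type) (f : I -> op) (i : I), fle (f i) (fsup I f);
  fsup_lub : forall (I : Type) (f : I -> op) (w : op),
      (forall i, fle (f i) w) -> fle (fsup I f) w;
  fdistr : forall (u : op) (I : Type) (f : I -> op),
      fmeet u (fsup I f) = fsup I (fun i => fmeet u (f i))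
}.

Arguments fle {_}.
Arguments fmeet {_}.
Arguments fsup {_}.

Definition Locale := Frame.

Definition fjoin (X : Frame) (u v : X) : X :=
  fsup bool (fun b : bool => if b then u else v).

(* The restriction map
   F(u) -> F(v) is [res u v]; it is only constrained when v <= u. *)
Record Posheaf (X : Frame) : Type := {
  sec :> X -> Type;
  res : forall u v : X, sec u -> sec v;
  res_id : forall u (s : sec u), res u u s = s;
  res_comp : forall u v w (s : sec u), fle w v -> fle v u ->
      res v w (res u v s) = res u w s;
  glue : forall (u : X) (I : Type) (ui : I -> X), u = fsup I ui ->
      forall s : forall i, sec (ui i),
      (forall i j, res (ui i) (fmeet (ui i) (ui j)) (s i)
                   = res (ui j) (fmeet (ui i) (ui j)) (s j)) ->
      exists t : sec u, (forall i, res u (ui i) t = s i) /\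
        forall t' : sec u, (forall i, res u (ui i) t' = s i) -> t' = t;
  sle : forall u, sec u -> sec u -> Prop;
  sle_refl : forall u (s : sec u), sle u s s;
  sle_trans : forall u (s t r : sec u), sle u s t -> sle u t r -> sle u s r;
  sle_antisym : forall u (s t : sec u), sle u s t -> sle u t s -> s = t;
  res_mono : forall u v (s t : sec u), fle v u -> sle u s t ->
      sle v (res u v s) (res u v t);
  sle_local : forall (u : X) (I : Type) (ui : I -> X), u = fsup I ui ->
      forall s t : sec u, (forall i, sle (ui i) (res u (ui i) s) (res u (ui i) t)) ->
      sle u s t
}.

Arguments sec {_}.
Arguments res {_}.
Arguments sle {_}.

Definition is_left_adjoint (X : Frame) (F : Posheaf X) (v u : X)
    (l : F v -> F u) : Prop :=
  (forall x y : F v, sle F v x y -> sle F u (l x) (l y)) /\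
  (forall (x : F v) (y : F u), sle F u (l x) y <-> sle F v x (res F u v y)).


(* Write [w = u \/ v] and [m = u /\ v].  Since [l] is left adjoint to
   restriction, [l_{v,w} x] is the least section on [w] restricting to [x]
   on [v].  Gluing [l_{m,u}(x|m)] with [x] gives such a section (its
   restriction to [m] is [x|m], because restriction is surjective so that
   [res o l = id]); hence [(l_{v,w} x)|u <= l_{m,u}(x|m)].  Conversely
   [x <= (l_{v,w} x)|v], and restricting to [m] and transposing along the
   adjunction [l_{m,u} -| res] gives the other inequality. *)

Lemma fle_fjoin_l (X : Frame) (u v : X) : fle u (fjoin X u v).
Proof. exact (fsup_ub X bool (fun b : bool => if b then u else v) true). Qed.

Lemma fle_fjoin_r (X : Frame) (u v : X) : fle v (fjoin X u v).
Proof. exact (fsup_ub X bool (fun b : bool => if b then u else v) false). Qed.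

Lemma fmeet_comm_le (X : Frame) (u v : X) : fle (fmeet v u) (fmeet u v).
Proof. apply fmeet_glb; [apply fmeet_r | apply fmeet_l]. Qed.

Section LeftAdjoint.

Variables (X : Frame) (F : Posheaf X) (a b : X) (l : F a -> F b).
Hypothesis Hl : is_left_adjoint X F a b l.

Lemma left_adjoint_unit (z : F a) : sle F a z (res F b a (l z)).
Proof. apply (proj2 Hl). apply sle_refl. Qed.

Lemma left_adjoint_le_of_res (z : F a) (y : F b) :
  res F b a y = z -> sle F b (l z) y.
Proof. intros Hy. apply (proj2 Hl). rewrite Hy. apply sle_refl. Qed.

Lemma res_left_adjoint (Hab : fle a b)
    (Hsurj : forall z : F a, exists y : F b, res F b a y = z) (z : F a) :
  res F b a (l z) = z.
Proof.
  destruct (Hsurj z) as [y Hy].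
  apply sle_antisym; [| apply left_adjoint_unit].
  subst z.
  apply res_mono; [exact Hab |].
  apply left_adjoint_le_of_res. reflexivity.
Qed.

End LeftAdjoint.

Lemma res_glue_join (X : Frame) (F : Posheaf X) (u v : X) (s : F u) (t : F v) :
  res F u (fmeet u v) s = res F v (fmeet u v) t ->
  exists y : F (fjoin X u v), res F (fjoin X u v) u y = s /\ res F (fjoin X u v) v y = t.
Proof.
  intros Hst.
  set (fam := fun b : bool => match b return F (if b then u else v) with
                              | true => s | false => t end).
  destruct (glue X F (fjoin X u v) bool (fun b : bool => if b then u else v)
              eq_refl fam) as [y [Hy _]].
  - intros [|] [|]; simpl; try reflexivity; [exact Hst | symmetry].
    rewrite <- (res_comp X F u (fmeet u v) (fmeet v u) s (fmeet_comm_le X u v) (fmeet_l X u v)).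
    rewrite <- (res_comp X F v (fmeet u v) (fmeet v u) t (fmeet_comm_le X u v) (fmeet_r X u v)).
    rewrite Hst. reflexivity.
  - exists y. exact (conj (Hy true) (Hy false)).
Qed.

Theorem lemma3p1 (X : Locale) (F : Posheaf X)
    (l : forall v u : X, F v -> F u)
    (Hsurj : forall v u : X, fle v u ->
        forall y : F v, exists x : F u, res F u v x = y)
    (Hadj : forall v u : X, fle v u -> is_left_adjoint X F v u (l v u)) :
  forall (u v : X) (x : F v),
    res F (fjoin X u v) u (l v (fjoin X u v) x)
    = l (fmeet u v) u (res F v (fmeet u v) x).
Proof.
  intros u v x.
  set (w := fjoin X u v). set (m := fmeet u v).
  pose proof (fle_fjoin_l X u v) as Huw. pose proof (fle_fjoin_r X u v) as Hvw.
  pose proof (fmeet_l X u v) as Hmu. pose proof (fmeet_r X u v) as Hmv.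
  apply sle_antisym.
  - destruct (res_glue_join X F u v (l m u (res F v m x)) x) as [y [Hyu Hyv]].
    { exact (res_left_adjoint X F m u _ (Hadj m u Hmu) Hmu (Hsurj m u Hmu) _). }
    rewrite <- Hyu. apply res_mono; [exact Huw |].
    exact (left_adjoint_le_of_res X F v w _ (Hadj v w Hvw) x y Hyv).
  - apply (proj2 (Hadj m u Hmu)).
    rewrite (res_comp X F w u m _ Hmu Huw), <- (res_comp X F w v m _ Hmv Hvw).
    apply res_mono; [exact Hmv |].
    exact (left_adjoint_unit X F v w _ (Hadj v w Hvw) x).
Qed.
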